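(* Let $n \ge k \ge 1$ be integers, let $G$ be a simple undirected graph on $n$ vertices, and let $P_1,\ldots,P_k$ be vertex-disjoint directed paths in $G$ covering $V(G)$ such that the digraph $D(G,P_1,\ldots,P_k)$ is acyclic. Then $\lvert E(G)\rvert \le kn - \binom{k+1}{2}$. Equivalently, $\Gamma(n,k) \le kn - \binom{k+1}{2}$.
   Context: $y \sim z$ means $y$ and $z$ are adjacent in $G$. A directed path in $G$ is a sequence $v_1 \to \cdots \to v_m$ ($m \ge 1$) of distinct vertices with $v_tv_{t+1} \in E(G)$; its arcs are $v_t \to v_{t+1}$. Vertex-disjoint and covering means every vertex lies in exactly one $P_j$. The digraph $D = D(G,P_1,\ldots,P_k)$ has vertex set $V(G)$, and for distinct $x,y$ there is an arc $x \to y$ iff either some $P_j$ contains the arc $x \to y$, or there is a vertex $z$ and a path $P_j$ with $x \to z$ an arc of $P_j$ and $y \sim z$. $\Gamma(n,k)$ is the maximum of $\lvert E(G)\rvert$ over all such $G$ on $n$ vertices with $k$ such paths for which $D$ is acyclic. *)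

From mathcomp Require Import all_boot.
Set Implicit Arguments. Unset Strict Implicit. Unset Printing Implicit Defensive.

Definition simple_graph (T : finType) (e : rel T) : Prop :=
  symmetric e /\ irreflexive e.

Definition edges (T : finType) (e : rel T) : {set {set T}} :=
  [set A : {set T} | [exists x, exists y, e x y && (A == [set x; y])]].

Definition arc (T : eqType) (s : seq T) (x y : T) : bool :=
  (x, y) \in zip s (behead s).

Definition dpath (T : finType) (e : rel T) (s : seq T) : Prop :=
  s != [::] /\ uniq s /\ (forall x y, arc s x y -> e x y).

Definition Darc (T : finType) (e : rel T) (k : nat) (P : 'I_k -> seq T)
    (x y : T) : bool :=
  (x != y) &&
  [exists j : 'I_k, arc (P j) x y || [exists z, arc (P j) x z && e y z]].

Definition acyclic (T : finType) (r : rel T) : Prop :=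
  forall x y, r x y -> ~~ connect r y x.

From Pilot Require Import Defs.
From mathcomp Require Import all_boot.
From mathcomp Require Import zify.
Set Implicit Arguments. Unset Strict Implicit. Unset Printing Implicit Defensive.

(* Since D is acyclic, the vertices admit an injective key f increasing along
   the arcs of D; orient every edge towards its endpoint of larger key. A vertex v
   has at most one forward neighbour on each path P_j: if w1 precedes w2 on P_j
   and v ~ w2, then the predecessor x of w2 on P_j satisfies x -> v in D (or
   x = v), so f w1 <= f x <= f v. The vertex with exactly i vertices of larger
   key therefore has forward degree at most min(k, i), and summing over i < n
   bounds the number of edges by kn - C(k+1, 2). *)

Lemma bin2_add_bin2S k : 'C(k, 2) + 'C(k.+1, 2) = k * k.
Proof. by elim: k => // k IHk; rewrite (binS k 1) (binS k.+1 1) !bin1; lia. Qed.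

Lemma sum_minn_ord k n : k <= n -> \sum_(i < n) minn k i + 'C(k.+1, 2) = k * n.
Proof.
move=> /subnKC <-; elim: (n - k) => [|d IHd].
  rewrite addn0; have -> : \sum_(i < k) minn k i = 'C(k, 2).
    rewrite -bin2_sum big_mkord; apply: eq_bigr => i _.
    exact/minn_idPr/ltnW.
  exact: bin2_add_bin2S.
rewrite addnS big_ord_recr /= (minn_idPl (leq_addr _ _)) mulnS.
by rewrite addnAC IHd addnC.
Qed.

Lemma leq_card_bigcup (I T : finType) (P : pred I) (F : I -> {set T}) :
  #|\bigcup_(i | P i) F i| <= \sum_(i | P i) #|F i|.
Proof.
apply: (big_ind2 (fun (A : {set T}) m => #|A| <= m)) => [|A m B p hA hB|i _] //.
- by rewrite cards0.
- exact: leq_trans (leq_card_setU A B) (leq_add hA hB).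
Qed.

Lemma sum_minn_card_above (T : finType) (f : T -> nat) k (A : {set T}) :
  injective f ->
  \sum_(v in A) minn k #|[set w in A | f v < f w]| = \sum_(i < #|A|) minn k i.
Proof.
move=> f_inj; move Em: #|A| => m; elim: m A Em => [|m IHm] A cardA.
  by move/eqP: cardA; rewrite cards_eq0 => /eqP ->; rewrite big_set0 big_ord0.
have [x0 x0A] : exists x, x \in A by apply/set0Pn; rewrite -card_gt0 cardA.
case: (arg_minnP f x0A) => a aA' a_min; have aA : a \in A := aA'.
have above_a : [set w in A | f a < f w] = A :\ a.
  apply/setP=> w; rewrite !inE; case: (eqVneq w a) => [->|wa]; first by rewrite ltnn andbF.
  by rewrite andbC ltn_neqAle (inj_eq f_inj) eq_sym wa /=; apply/andb_idl/a_min.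
have card_Aa : #|A :\ a| = m by move: cardA; rewrite (cardsD1 a) aA add1n => -[].
rewrite (bigD1 a) //= above_a card_Aa big_ord_recr /= addnC; congr (_ + _).
rewrite -(IHm _ card_Aa); apply: eq_big => [v|v]; first by rewrite !inE andbC.
case/andP=> vA _; congr minn; apply: eq_card => w; rewrite !inE.
by case: (eqVneq w a) => [->|_] //=; rewrite ltnNge (a_min v vA) andbF.
Qed.

Lemma acyclic_injective_key (T : finType) (r : rel T) :
  acyclic r -> exists2 f : T -> nat, injective f & forall x y, r x y -> f x < f y.
Proof.
(* The number of vertices reaching v grows strictly along arcs; enum_rank breaks ties. *)
move=> r_acyclic; pose h v := #|[set u | connect r u v]|.
have h_mono x y : r x y -> h x < h y.
  move=> rxy; apply/proper_card/properP; split.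
    by apply/subsetP=> u; rewrite !inE => /connect_trans; apply; apply: connect1.
  by exists y; rewrite !inE ?connect0 //; apply: r_acyclic.
exists (fun v => h v * #|T| + enum_rank v).
  move=> x y /(congr1 (modn^~ #|T|)); rewrite !modnMDl !modn_small //.
  by move/ord_inj/enum_rank_inj.
move=> x y /h_mono hxy; have : enum_rank x < #|T| := ltn_ord _.
have : (h x).+1 * #|T| <= h y * #|T| by rewrite leq_mul2r hxy orbT.
rewrite mulSn; lia.
Qed.

Lemma arc_nth (T : eqType) (s : seq T) x0 i :
  i.+1 < size s -> Defs.arc s (nth x0 s i) (nth x0 s i.+1).
Proof.
move=> lt_is; rewrite /Defs.arc -nth_behead.
have lt_izip : i < size (zip s (behead s)) by rewrite size_zip size_behead; lia.
have <- : nth (x0, x0) (zip s (behead s)) i = (nth x0 s i, nth x0 (behead s) i).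
  by rewrite nth_zip_cond lt_izip.
exact: mem_nth.
Qed.

Definition fwd_nbhd (T : finType) (e : rel T) (f : T -> nat) (v : T) : {set T} :=
  [set w | e v w & f v < f w].

Lemma card_edges_le_sum_fwd_nbhd (T : finType) (e : rel T) (f : T -> nat) :
  simple_graph e -> injective f -> #|edges e| <= \sum_v #|fwd_nbhd e f v|.
Proof.
move=> [e_sym e_irr] f_inj.
have edges_sub : edges e \subset \bigcup_v [set [set v; w] | w in fwd_nbhd e f v].
  apply/subsetP=> _ /[!inE] /existsP[x /existsP[y /andP[exy /eqP->]]].
  have : f x != f y by rewrite (inj_eq f_inj); apply: contraTneq exy => ->; rewrite e_irr.
  case: ltngtP => // fxy _; apply/bigcupP.
  - by exists x => //; apply/imsetP; exists y; rewrite // inE exy fxy.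
  - exists y => //; apply/imsetP; exists x; last by rewrite setUC.
    by rewrite inE e_sym exy fxy.
apply: leq_trans (subset_leq_card edges_sub) _.
apply: leq_trans (leq_card_bigcup _ _) _; apply: leq_sum => v _.
exact: leq_imset_card.
Qed.

Section PathCover.

Variables (T : finType) (e : rel T) (k : nat) (P : 'I_k -> seq T) (f : T -> nat).
Hypothesis P_path : forall j, dpath e (P j).
Hypothesis P_cover : forall v, exists j, v \in P j.
Hypothesis f_mono : forall x y, Darc e P x y -> f x < f y.

Lemma sorted_path_key j : sorted (relpre f leq) (P j).
Proof.
have [_ [P_uniq _]] := P_path j.
case E: (P j) => [//|x0 s]; rewrite -E; apply/(sortedP x0) => i lt_i.
apply/ltnW/f_mono/andP; split.
  by rewrite nth_uniq ?(ltnW lt_i) // ltn_eqF.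
by apply/existsP; exists j; rewrite arc_nth.
Qed.

Lemma leq_key_nth j x0 i i' :
  i <= i' -> i' < size (P j) -> f (nth x0 (P j) i) <= f (nth x0 (P j) i').
Proof.
move=> le_ii' lt_i'; have f_leq_tr : transitive (relpre f leq).
  by move=> y x z; apply: leq_trans.
apply: (sorted_leq_nth f_leq_tr (fun y => leqnn (f y)) x0 (sorted_path_key j)) => //.
by rewrite inE (leq_ltn_trans le_ii').
Qed.

Lemma key_le_before_nbr v j w1 w2 :
  w1 \in P j -> w2 \in P j -> index w1 (P j) < index w2 (P j) -> e v w2 ->
  f w1 <= f v.
Proof.
move=> w1P w2P lt_w12 e_vw2; set x := nth w1 (P j) (index w2 (P j)).-1.
have pos_w2 : 0 < index w2 (P j) by apply: leq_ltn_trans lt_w12.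
have lt_w2 : index w2 (P j) < size (P j) by rewrite index_mem.
have le_w1x : f w1 <= f x.
  rewrite -[w1 in f w1](nth_index w1 w1P); apply: leq_key_nth; last by lia.
  by rewrite -ltnS prednK.
have [<- //|x_neq_v] := eqVneq x v.
have arc_x : Defs.arc (P j) x w2.
  by have := @arc_nth _ (P j) w1 (index w2 (P j)).-1; rewrite prednK ?nth_index //; apply.
have x_to_v : Darc e P x v.
  rewrite /Darc x_neq_v; apply/existsP; exists j.
  by apply/orP; right; apply/existsP; exists w2; rewrite arc_x e_vw2.
exact: leq_trans le_w1x (ltnW (f_mono x_to_v)).
Qed.

Lemma card_fwd_nbhd_path_le1 v j : #|[set w in fwd_nbhd e f v | w \in P j]| <= 1.
Proof.
apply/card_le1_eqP => w1 w2; rewrite !inE => /andP[/andP[e1 f1] w1P] /andP[/andP[e2 f2] w2P].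
have [lt_w12|lt_w21|eq_w12] := ltngtP (index w1 (P j)) (index w2 (P j)).
- by have := key_le_before_nbr w1P w2P lt_w12 e2; rewrite leqNgt f1.
- by have := key_le_before_nbr w2P w1P lt_w21 e1; rewrite leqNgt f2.
- by rewrite -(nth_index w1 w1P) eq_w12 nth_index.
Qed.

Lemma card_fwd_nbhd_le_minn v : #|fwd_nbhd e f v| <= minn k #|[set w | f v < f w]|.
Proof.
rewrite leq_min; apply/andP; split.
  have fwd_sub : fwd_nbhd e f v \subset \bigcup_(j < k) [set w in fwd_nbhd e f v | w \in P j].
    apply/subsetP=> w w_fwd; have [j wPj] := P_cover w.
    by apply/bigcupP; exists j; rewrite // inE w_fwd.
  apply: leq_trans (subset_leq_card fwd_sub) (leq_trans (leq_card_bigcup _ _) _).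
  rewrite -[k in _ <= k]card_ord -sum1_card; apply: leq_sum => j _.
  exact: card_fwd_nbhd_path_le1.
by apply/subset_leq_card/subsetP=> w; rewrite !inE => /andP[_ ->].
Qed.

End PathCover.

Theorem lemma2 (n k : nat) (T : finType) (e : rel T) (P : 'I_k -> seq T) :
  1 <= k -> k <= n -> #|T| = n ->
  simple_graph e ->
  (forall j, dpath e (P j)) ->
  (forall v : T, exists j, v \in P j) ->
  (forall (v : T) (i j : 'I_k), v \in P i -> v \in P j -> i = j) ->
  acyclic (Darc e P) ->
  #|edges e| <= k * n - 'C(k.+1, 2).
Proof.
move=> _ le_kn card_T G_simple P_path P_cover _ D_acyclic.
have [f f_inj f_mono] := acyclic_injective_key D_acyclic.
have sum_fwd : \sum_v #|fwd_nbhd e f v| <= \sum_(i < n) minn k i.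
  rewrite -card_T -cardsT -(sum_minn_card_above k _ f_inj).
  apply: (@leq_trans (\sum_v minn k #|[set w | f v < f w]|)).
    by apply: leq_sum => v _; apply: card_fwd_nbhd_le_minn.
  apply/eq_leq/eq_big => [v|v _]; first by rewrite inE.
  by congr minn; apply: eq_card => w; rewrite !inE.
have := card_edges_le_sum_fwd_nbhd G_simple f_inj; have := sum_minn_ord le_kn; lia.
Qed.
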